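(* Let $1\le k<n$ and let $C_k=[c_{ij}]_{i,j=1}^k$ be the upper-left $k\times k$ submatrix of an incomplete $n\times n$ pairwise comparison matrix. For $i=1,\dots,k$ let $s_i$ be the number of missing entries in the $i$-th row of $C_k$, $s_{\mathrm{MAX}}=\max_i s_i$, $s_{\mathrm{MIN}}=\min_i s_i$. Let $D_k=[d_{ij}]$ with $d_{ij}=c_{ij}$ if $c_{ij}$ is known and $d_{ij}=0$ if $c_{ij}=?$, and let $A_k$ be the $k\times k$ matrix with diagonal entries $1$ and off-diagonal entries $(A_k)_{ij}=-\frac{d_{ij}}{n-s_i-1}$. If $k=1$, or if $1<k<n$ and $$\overline{\mathit{CI}}(C_k)<\frac{n-k-s_{\mathrm{MAX}}+s_{\mathrm{MIN}}}{k-1},$$ then $A_k$ is invertible, so the system $A_kw=b$ has a unique solution for every $b\in\mathbb{R}^k$.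
   Context: An incomplete pairwise comparison matrix has entries either positive reals or unknown ($c_{ij}=c_{ji}=?$), with known entries satisfying $c_{ii}=1$, $c_{ij}=1/c_{ji}$. Harker's consistency index of a $k\times k$ incomplete pairwise comparison matrix $M$ ($k\ge2$) is $\overline{\mathit{CI}}(M)=\frac{\rho(H)-k}{k-1}$, where $\rho$ is the spectral radius and $H=[h_{ij}]$ has $h_{ii}=1+s_i$ ($s_i$ = number of missing entries in row $i$ of $M$), $h_{ij}=0$ if $m_{ij}=?$, and $h_{ij}=m_{ij}$ otherwise. In the arithmetic incomplete HRE method the unknown weights of $a_1,\dots,a_k$ solve $A_kw=b$ with $b_i=\frac{1}{n-s_i-1}\sum_{j=k+1}^n c_{ij}w(a_j)$ (here all comparisons between $a_1,\dots,a_k$ and the reference alternatives are taken to be known, so that $s_i$ counts the missing entries of row $i$). *)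

From HB Require Import structures.
From mathcomp Require Import all_boot all_order all_algebra.
From mathcomp Require Import complex.
From mathcomp Require Import classical_sets reals.
Set Implicit Arguments. Unset Strict Implicit. Unset Printing Implicit Defensive.
Import Order.TTheory GRing.Theory Num.Theory.
Local Open Scope ring_scope.
Local Open Scope classical_set_scope.

Section Defs.
Variable R : realType.

(* An incomplete pairwise comparison matrix: entry [Some x] = known, [None] = "?". *)
Definition incomplete_pcm (n : nat) (C : 'M[option R]_n) : Prop :=
  (forall i, C i i = Some 1) /\
  (forall i j, C i j = None <-> C j i = None) /\
  (forall i j x, C i j = Some x -> 0 < x /\ C j i = Some x^-1).

Definition nmiss (k : nat) (C : 'M[option R]_k) (i : 'I_k) : nat :=
  #|[set j : 'I_k | C i j == None]|.

Definition ulsub (n k : nat) (Hkn : (k <= n)%N) (C : 'M[option R]_n) : 'M[option R]_k :=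
  \matrix_(i < k, j < k) C (widen_ord Hkn i) (widen_ord Hkn j).

Definition dmx (k : nat) (C : 'M[option R]_k) : 'M[R]_k :=
  \matrix_(i, j) odflt 0 (C i j).

Definition harkerH (k : nat) (C : 'M[option R]_k) : 'M[R]_k :=
  \matrix_(i, j) if i == j then 1 + (nmiss C i)%:R else odflt 0 (C i j).

Definition spectral_radius (k : nat) (A : 'M[R]_k) : R :=
  sup [set r : R | exists z : R[i],
         root (char_poly (map_mx (fun x : R => x%:C%C) A)) z /\ r%:C%C = `|z|].

Definition harkerCI (k : nat) (C : 'M[option R]_k) : R :=
  (spectral_radius (harkerH C) - k%:R) / (k%:R - 1).

Definition HRE_A (n k : nat) (C : 'M[option R]_k) : 'M[R]_k :=
  \matrix_(i, j) if i == j then 1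
                 else - dmx C i j / (n%:R - (nmiss C i)%:R - 1).

(* s_MAX and s_MIN (for k >= 1; every s_i <= k - 1 < k, so the idx k is harmless) *)
Definition smax (k : nat) (C : 'M[option R]_k) : nat := \max_(i < k) nmiss C i.
Definition smin (k : nat) (C : 'M[option R]_k) : nat := \big[minn/k]_(i < k) nmiss C i.

End Defs.

(** [A_k] is the product of the positive diagonal matrix [diag (1 / (n - s_i - 1))]
    and [n I - H], where [H] is Harker's matrix of [C_k]. So [A_k] is singular only
    if [n] is an eigenvalue of [H], which forces [rho(H) >= n] and hence
    [CI(C_k) >= (n - k) / (k - 1)]; since [s_MIN <= s_MAX] this contradicts the
    hypothesis. For [k = 1], [A_k] is the identity. *)

From Pilot Require Import Defs.
From HB Require Import structures.
From mathcomp Require Import all_boot all_order all_algebra.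
From mathcomp Require Import complex.
From mathcomp Require Import classical_sets reals.
Import Order.TTheory GRing.Theory Num.Theory.
Local Open Scope ring_scope.

Lemma unitmx_solve_unique (F : fieldType) k (A : 'M[F]_k) :
  A \in unitmx -> forall b : 'cV[F]_k, exists! w : 'cV[F]_k, A *m w = b.
Proof.
move=> Aunit b; exists (invmx A *m b); split.
  by rewrite mulmxA mulmxV // mul1mx.
by move=> w <-; rewrite mulmxA mulVmx // mul1mx.
Qed.

Lemma bigmin_le_bigmax k (F : 'I_k -> nat) : (0 < k)%N ->
  (\big[minn/k]_(i < k) F i <= \max_(i < k) F i)%N.
Proof.
case: k F => // k F _; rewrite big_ord_recl.
exact: leq_trans (geq_minl _ _) (leq_bigmax _).
Qed.

Lemma eigenvalue_nonunit_shift (F : fieldType) k (A : 'M[F]_k) (a : F) :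
  a%:M - A \notin unitmx -> eigenvalue A a.
Proof.
rewrite unitmxE unitfE negbK => /det0P [v vn0].
move/eqP; rewrite mulmxBr subr_eq0 mul_mx_scalar => /eqP vA.
by apply/eigenvalueP; exists v.
Qed.

Section SpectralRadius.
Variable R : realType.

Lemma eigenvalue_le_spectral_radius k (A : 'M[R]_k) (x : R) :
  eigenvalue A x -> `|x| <= spectral_radius A.
Proof.
move=> eigx.
have normc_real (y : R) : `|y%:C%C| = `|y|%:C%C.
  by rewrite normc_def /= expr0n /= addr0 sqrtr_sqr.
rewrite /spectral_radius (_ : map_mx _ A = map_mx (real_complex R) A) //.
set p := char_poly _.
have px : root p x%:C%C.
  by rewrite -eigenvalue_root_char (eigenvalue_map (real_complex R)).
(* the moduli are bounded by the sum of the moduli of the finitely many roots [rs] of [p] *)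
have [rs p_split] := closed_field_poly_normal p.
have root_rs z : root p z -> z \in rs.
  by rewrite p_split (monicP (char_poly_monic _)) scale1r root_prod_XsubC.
apply: sup_upper_bound; last by exists x%:C%C.
split; first by exists `|x|, x%:C%C.
exists (\sum_(z <- rs) Num.sqrt (complex.Re z ^+ 2 + complex.Im z ^+ 2)).
move=> r [z [pz]]; rewrite normc_def => /complexI ->.
rewrite (big_rem z (root_rs z pz)) /= lerDl.
by apply: sumr_ge0 => y _; apply: sqrtr_ge0.
Qed.

Lemma unitmx_shift_gt_spectral_radius k (A : 'M[R]_k) (x : R) :
  spectral_radius A < `|x| -> x%:M - A \in unitmx.
Proof.
move=> ltAx; apply: contraT => /eigenvalue_nonunit_shift /eigenvalue_le_spectral_radius.
by rewrite leNgt ltAx.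
Qed.

End SpectralRadius.

Section HREMatrix.
Variables (R : realType) (n k : nat) (C : 'M[option R]_k).
Hypothesis C_diag : forall i, C i i = Some 1.
Hypothesis lt_kn : (k < n)%N.

Lemma nmiss_lt i : (nmiss C i < k)%N.
Proof.
rewrite /nmiss.
(* [nmiss] counts a classical set (its scope is open in Defs); pass to a finset *)
have -> : #|[set j | C i j == None]%classic| = #|[set j | C i j == None]|.
  apply: eq_card => j; rewrite inE; apply/idP/idP => [/set_mem //|].
  exact: mem_set.
have miss_offdiag : [set j | C i j == None] \subset [set~ i].
  by apply/fintype.subsetP => j; rewrite !inE; apply: contraTN => /eqP ->; rewrite C_diag.
apply: leq_ltn_trans (subset_leq_card miss_offdiag) _.
by rewrite cardsC1 card_ord prednK // (leq_ltn_trans _ (ltn_ord i)).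
Qed.

Lemma HRE_denom_neq0 i : n%:R - (nmiss C i)%:R - 1 != 0 :> R.
Proof.
have lt_sn : ((nmiss C i).+1 < n)%N := leq_ltn_trans (nmiss_lt i) lt_kn.
by rewrite -addrA -opprD natr1 subr_eq0 eqr_nat gtn_eqF.
Qed.

Lemma HRE_A_factor : HRE_A n C =
  diag_mx (\row_i (n%:R - (nmiss C i)%:R - 1)^-1) *m (n%:R%:M - harkerH C).
Proof.
rewrite mul_diag_mx; apply/matrixP => i j; rewrite !mxE.
case: eqP => [->|_] /=; last by rewrite mulr0n sub0r mulrC.
by rewrite mulr1n (addrC 1) opprD addrA mulVf // HRE_denom_neq0.
Qed.

Lemma HRE_A_unitmxE : (HRE_A n C \in unitmx) = (n%:R%:M - harkerH C \in unitmx).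
Proof.
rewrite HRE_A_factor unitmx_mul unitmxE det_diag unitfE prodf_seq_neq0.
by rewrite (@eq_all _ _ predT) ?all_predT // => i; rewrite mxE invr_eq0 HRE_denom_neq0.
Qed.

Lemma spectral_radius_harker_lt (lt1k : (1 < k)%N) :
  harkerCI C < (n%:R - k%:R - (smax C)%:R + (smin C)%:R) / (k%:R - 1) ->
  spectral_radius (harkerH C) < n%:R.
Proof.
have k1_gt0 : (0 : R) < k%:R - 1 by rewrite subr_gt0 ltr1n.
rewrite /harkerCI ltr_pM2r ?invr_gt0 // => ltCI.
have smin_le_smax : (smin C)%:R <= (smax C)%:R :> R.
  by rewrite ler_nat bigmin_le_bigmax // ltnW.
rewrite -(ltrD2r (- k%:R)); apply: (lt_le_trans ltCI).
by rewrite -addrA gerDl addrC subr_le0.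
Qed.

End HREMatrix.

Lemma HRE_A_dim1 (R : realType) n (C : 'M[option R]_1) : HRE_A n C = 1%:M.
Proof. by apply/matrixP => i j; rewrite !mxE !ord1 eqxx. Qed.

Theorem mainTheorem6 (R : realType) (n k : nat) (Hk1 : (1 <= k)%N) (Hkn : (k < n)%N)
    (C : 'M[option R]_n) :
  incomplete_pcm C ->
  let Ck := ulsub (ltnW Hkn) C in
  (k = 1%N \/
   ((1 < k)%N /\
    harkerCI Ck < (n%:R - k%:R - (smax Ck)%:R + (smin Ck)%:R) / (k%:R - 1))) ->
  HRE_A n Ck \in unitmx /\
  (forall b : 'cV[R]_k, exists! w : 'cV[R]_k, HRE_A n Ck *m w = b).
Proof.
move=> [C_diag _] Ck hyp.
suff Aunit : HRE_A n Ck \in unitmx by split; last exact: unitmx_solve_unique.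
case: hyp => [k1 | [lt1k ltCI]].
  by move: Ck; rewrite k1 => Ck; rewrite HRE_A_dim1 unitmx1.
have Ck_diag i : Ck i i = Some 1 by rewrite /Ck /ulsub mxE C_diag.
rewrite (@HRE_A_unitmxE R n k Ck Ck_diag Hkn); apply: unitmx_shift_gt_spectral_radius.
by rewrite normr_nat; apply: spectral_radius_harker_lt.
Qed.
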